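(* In any two-player perfect-information game, with exact EPFs $U_s$ and bounds $\underline V,\overline V$ as in the context, for every state $s\in\mathcal S$ we have $\{\mu\in\mathbb R: U_s(\mu)>-\infty\}=[\underline V(s),\overline V(s)]$.
   Context: A two-player perfect-information game is a finite rooted tree with states $\mathcal S$. Its leaves $\mathcal L$ carry payoffs $r_1(\ell),r_2(\ell)$ for the leader $\mathsf P_1$ and the follower $\mathsf P_2$. Non-leaf states are partitioned into leader states $\mathcal S_1$ and follower states $\mathcal S_2$, and $\mathcal C(s)$ denotes the children of $s$. Bounds, defined by backward induction: - $\underline V(\ell)=\overline V(\ell)=r_2(\ell)$ for leaves; - $\underline V(s)=\min_{s'\in\mathcal C(s)}\underline V(s')$ for $s\in\mathcal S_1$; - $\underline V(s)=\max_{s'\in\mathcal C(s)}\underline V(s')$ for $s\in\mathcal S_2$; - $\overline V(s)=\max_{s'\in\mathcal C(s)}\overline V(s')$ for every non-leaf $s$. For $s\in\mathcal S_2$ and $s'\in\mathcal C(s)$, let $\tau(s')=\max_{s^!\in\mathcal C(s),s^!\ne s'}\underline V(s^!)$ (the maximum over the empty set is $-\infty$). Let $\beta(s')=\tau(s')$ if the parent of $s'$ is in $\mathcal S_2$, and $-\infty$ if it is in $\mathcal S_1$. Operators, for $g:\mathbb R\to\mathbb R\cup\{-\infty\}$: - $\bigwedge_i g_i$ is the pointwise infimum of all concave $h\ge\max_i g_i$; - $[g\triangleright t](\mu)=g(\mu)$ for $\mu\ge t$ and $-\infty$ otherwise. Exact Enforceable Payoff Frontiers: $U_\ell(\mu)=r_1(\ell)$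 if $\mu=r_2(\ell)$ and $-\infty$ otherwise; $U_s=\bigwedge_{s'\in\mathcal C(s)}(U_{s'}\triangleright\beta(s'))$ for non-leaf $s$. *)

From HB Require Import structures.
From mathcomp Require Import all_boot all_order all_algebra.
From mathcomp Require Import boolp classical_sets reals constructive_ereal ereal set_interval.

Set Implicit Arguments.
Unset Strict Implicit.
Unset Printing Implicit Defensive.
Import Order.TTheory GRing.Theory Num.Theory.
Local Open Scope ring_scope.
Local Open Scope classical_set_scope.

Inductive player := Leader | Follower.

(* A finite rooted game tree.  Leaf r1 r2 carries payoffs r1 (leader) and
   r2 (follower).  Node p c cs is a non-leaf state owned by p whose
   (nonempty) list of children is c :: cs. *)
Inductive gtree (R : Type) :=
| Leaf of R & R
| Node of player & gtree R & seq (gtree R).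

Arguments Leaf {R}.
Arguments Node {R}.

Section Game.
Variable R : realType.

Fixpoint Vlo (t : gtree R) : R :=
  match t with
  | Leaf _ r2 => r2
  | Node Leader c cs => foldr Num.min (Vlo c) (map Vlo cs)
  | Node Follower c cs => foldr Num.max (Vlo c) (map Vlo cs)
  end.

Fixpoint Vhi (t : gtree R) : R :=
  match t with
  | Leaf _ r2 => r2
  | Node _ c cs => foldr Num.max (Vhi c) (map Vhi cs)
  end.

Definition tau (vs : seq R) (i : nat) : \bar R :=
  \big[Order.max/-oo%E]_(j < size vs | (j : nat) != i) (nth 0 vs j)%:E.

Definition beta (p : player) (vs : seq R) (i : nat) : \bar R :=
  match p with
  | Follower => tau vs i
  | Leader => -oo%E
  end.

Definition betas (p : player) (vs : seq R) : seq (\bar R) :=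
  [seq beta p vs i | i <- iota 0 (size vs)].

Definition concave_ext (h : R -> \bar R) : Prop :=
  forall (x y t : R), (0 < t < 1)%R ->
    (t%:E * h x + (1 - t)%R%:E * h y <= h (t * x + (1 - t) * y)%R)%E.

Definition no_pinfty (h : R -> \bar R) : Prop := forall x, (h x < +oo)%E.

Definition envelope (gs : seq (R -> \bar R)) : R -> \bar R :=
  fun mu => ereal_inf
    [set h mu | h in [set h | concave_ext h /\ no_pinfty h /\
        forall x, (\big[Order.max/-oo%E]_(g <- gs) g x <= h x)%E]].

Definition restr (g : R -> \bar R) (t : \bar R) : R -> \bar R :=
  fun mu => if (t <= mu%:E)%E then g mu else -oo%E.

Fixpoint U (t : gtree R) : R -> \bar R :=
  match t with
  | Leaf r1 r2 => fun mu => if mu == r2 then r1%:E else -oo%E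
  | Node p c cs =>
      envelope [seq restr f.1 f.2 |
                 f <- zip (U c :: map U cs) (betas p (Vlo c :: map Vlo cs))]
  end.

End Game.

From mathcomp Require Import all_boot all_order all_algebra.
From mathcomp Require Import boolp classical_sets reals constructive_ereal ereal set_interval.
From mathcomp Require Import ring lra.
Import Order.TTheory GRing.Theory Num.Theory.
Local Open Scope ring_scope.
Local Open Scope classical_set_scope.

(* Each branch function [U_{s'} |> beta(s')] is finite
   only on [max(beta(s'), Vlo s'), Vhi s'], which lies inside [Vlo s, Vhi s],
   and is bounded by the largest leader payoff [M]; hence the concave function
   equal to [M] on [Vlo s, Vhi s] and to -oo elsewhere dominates the envelope.
   Conversely, the child realising [Vlo s] has [beta <= Vlo s] and the child
   realising [Vhi s] has [beta <= Vlo s <= Vhi s], so the pointwise maximum [F]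
   of the branches is finite at both endpoints; every concave majorant of [F]
   is at least [min (F (Vlo s)) (F (Vhi s))] in between, hence so is the
   envelope. *)

Section MaxMinFoldr.
Context {disp : Order.disp_t} {T : orderType disp}.

Lemma le_foldr_max (x y : T) xs : y \in x :: xs -> (y <= foldr Order.max x xs)%O.
Proof.
rewrite foldrE inE => /predU1P[->|y_xs]; first exact: bigmax_ge_id.
exact: le_bigmax_seq.
Qed.

Lemma foldr_max_mem (x : T) xs : foldr Order.max x xs \in x :: xs.
Proof.
elim: xs => [|y xs IH] /=; first exact: mem_head.
rewrite maxElt !inE; case: ifP => _; rewrite ?eqxx ?orbT //.
by move: IH; rewrite inE => /orP[->|->]; rewrite ?orbT.
Qed.

Lemma foldr_min_le (x y : T) xs : y \in x :: xs -> (foldr Order.min x xs <= y)%O.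
Proof.
rewrite foldrE inE => /predU1P[->|y_xs]; first exact: bigmin_le_id.
exact: ge_bigmin_seq.
Qed.

Lemma foldr_min_mem (x : T) xs : foldr Order.min x xs \in x :: xs.
Proof.
elim: xs => [|y xs IH] /=; first exact: mem_head.
rewrite minElt !inE; case: ifP => _; rewrite ?eqxx ?orbT //.
by move: IH; rewrite inE => /orP[->|->]; rewrite ?orbT.
Qed.

End MaxMinFoldr.

Section Game.
Context {R : realType}.
Implicit Types (a b x mu M : R) (t : gtree R) (h : R -> \bar R).

Lemma gtree_nth_ind (P : gtree R -> Prop) :
  (forall r1 r2, P (Leaf r1 r2)) ->
  (forall p c cs, (forall i, P (nth c (c :: cs) i)) -> P (Node p c cs)) ->
  forall t, P t.
Proof.
move=> PLeaf PNode; fix IH 1 => -[r1 r2|p c cs]; first exact: PLeaf.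
apply: PNode => -[|i] /=; first exact: IH.
by elim: cs i => [|t ts IHts] [|i] /=; [exact: IH|exact: IH|exact: IH|exact: IHts].
Qed.

Fixpoint r1max t : R :=
  match t with
  | Leaf r1 _ => r1
  | Node _ c cs => foldr Num.max (r1max c) (map r1max cs)
  end.

Section Children.
Context {c : gtree R} {cs : seq (gtree R)} (f : gtree R -> R).
Local Notation child i := (nth c (c :: cs) i).

Lemma le_child_max [i] : (i < size (c :: cs))%N ->
  f (child i) <= foldr Num.max (f c) (map f cs).
Proof.
by move=> lt_i; apply: le_foldr_max; rewrite -(nth_map c (f c)) // mem_nth ?size_map.
Qed.

Lemma child_min_le [i] : (i < size (c :: cs))%N ->
  foldr Num.min (f c) (map f cs) <= f (child i).
Proof.
by move=> lt_i; apply: foldr_min_le; rewrite -(nth_map c (f c)) // mem_nth ?size_map.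
Qed.

Lemma child_max_attained : exists2 i, (i < size (c :: cs))%N &
  foldr Num.max (f c) (map f cs) = f (child i).
Proof.
have /(nthP (f c)) [i] := foldr_max_mem (f c) (map f cs).
by rewrite -map_cons size_map => lt_i <-; exists i; rewrite ?(nth_map c).
Qed.

Lemma child_min_attained : exists2 i, (i < size (c :: cs))%N &
  foldr Num.min (f c) (map f cs) = f (child i).
Proof.
have /(nthP (f c)) [i] := foldr_min_mem (f c) (map f cs).
by rewrite -map_cons size_map => lt_i <-; exists i; rewrite ?(nth_map c).
Qed.

End Children.

Lemma tau_leP (vs : seq R) i z :
  (tau vs i <= z%:E)%E <->
  (forall j, (j < size vs)%N -> j != i -> nth 0 vs j <= z).
Proof.
split=> [/bigmax_leP[_ le_z] j lt_j ne_ji | le_z].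
  by rewrite -lee_fin (le_z (Ordinal lt_j)).
by apply: bigmax_le => [|j ne_ji]; rewrite ?leNye ?lee_fin ?le_z.
Qed.

Section Node.
Context {p : player} {c : gtree R} {cs : seq (gtree R)}.
Local Notation child i := (nth c (c :: cs) i).
Local Notation betai i := (beta p (map (@Vlo R) (c :: cs)) i).

Lemma U_Node : U (Node p c cs) =
  envelope [seq restr (U (child i)) (betai i) | i <- iota 0 (size (c :: cs))].
Proof.
have -> : U (Node p c cs) = envelope [seq restr f.1 f.2 |
    f <- zip (map (@U R) (c :: cs)) (betas p (map (@Vlo R) (c :: cs)))] by [].
rewrite /betas size_map -[X in map (@U R) X](mkseq_nth c (c :: cs)).
by rewrite /mkseq -map_comp zip_map -map_comp.
Qed.

Lemma Vlo_Node_attained : exists2 i, (i < size (c :: cs))%N &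
  Vlo (Node p c cs) = Vlo (child i).
Proof. by case: p; [exact: child_min_attained|exact: child_max_attained]. Qed.

Lemma beta_le_Vlo i : (betai i <= (Vlo (Node p c cs))%:E)%E.
Proof.
case: p; first exact: leNye.
apply/tau_leP => j; rewrite size_map => lt_j _.
by rewrite (nth_map c) //; exact: le_child_max.
Qed.

Lemma Vlo_Node_le [i x] : (i < size (c :: cs))%N ->
  (betai i <= x%:E)%E -> Vlo (child i) <= x -> Vlo (Node p c cs) <= x.
Proof.
move=> lt_i; case: p => [_|]; first exact: le_trans (child_min_le _ lt_i).
move=> /tau_leP le_x le_ix /=; have [j lt_j ->] := @child_max_attained c cs (@Vlo R).
have [-> //|ne_ji] := eqVneq j i.
by rewrite -(nth_map c 0) // le_x ?size_map.
Qed.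

End Node.

Lemma Vlo_le_Vhi t : Vlo t <= Vhi t.
Proof.
elim/gtree_nth_ind: t => [//|p c cs IH].
have [i lt_i ->] := @Vlo_Node_attained p c cs.
by rewrite (le_trans (IH i)) //; exact: le_child_max.
Qed.

Local Open Scope ereal_scope.

Definition plateau a b M : R -> \bar R :=
  fun x => if (a <= x <= b)%R then M%:E else -oo.

Lemma plateau_concave a b M : concave_ext (plateau a b M).
Proof.
move=> x y t /andP[t_gt0 t_lt1]; rewrite /plateau.
case: ifPn => [/andP[ax xb]|_]; last by rewrite gt0_muleNy ?lte_fin // addNye leNye.
case: ifPn => [/andP[ay yb]|_]; last first.
  by rewrite [X in _ + X]gt0_muleNy ?lte_fin ?subr_gt0 // addeNy leNye.
have -> : (a <= t * x + (1 - t) * y <= b)%R by apply/andP; split; nra.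
by rewrite -!EFinM -EFinD lee_fin; lra.
Qed.

Lemma plateau_no_pinfty a b M : no_pinfty (plateau a b M).
Proof. by move=> x; rewrite /plateau; case: ifP; rewrite ?ltry. Qed.

Lemma concave_ext_ge_min [h a b mu] : concave_ext h -> no_pinfty h ->
  (a <= mu <= b)%R -> Order.min (h a) (h b) <= h mu.
Proof.
move=> hc hp /andP[a_le b_ge].
have [->|ne_a] := eqVneq mu a; first by rewrite ge_min lexx.
have [->|ne_b] := eqVneq mu b; first by rewrite ge_min lexx orbT.
have a_lt : (a < mu)%R by rewrite lt_neqAle eq_sym ne_a.
have b_gt : (mu < b)%R by rewrite lt_neqAle ne_b.
have ba_gt0 : (0 < b - a)%R by rewrite subr_gt0 (lt_trans a_lt).
pose t := ((b - mu) / (b - a))%R.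
have t01 : (0 < t < 1)%R.
  apply/andP; split; first by apply: divr_gt0; rewrite // subr_gt0.
  by rewrite ltr_pdivrMr // mul1r; lra.
have -> : mu = (t * a + (1 - t) * b)%R by rewrite /t; field; rewrite gt_eqF.
apply: le_trans (hc a b t t01).
move: (hp a) (hp b); case: (h a) => [ra||]; case: (h b) => [rb||];
  rewrite ?ltxx // => _ _; rewrite ?ge_min ?leNye ?orbT //.
rewrite -!EFinM -EFinD !lee_fin; case/andP: t01 => t0 t1.
by case: (lerP ra rb) => ?; apply/orP; [left|right]; nra.
Qed.

Section Envelope.
Variable gs : seq (R -> \bar R).
Local Notation F x := (\big[Order.max/-oo]_(g <- gs) g x).

Lemma envelope_le h : concave_ext h -> no_pinfty h ->
  (forall x, F x <= h x) -> forall mu, envelope gs mu <= h mu.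
Proof. by move=> hc hp hge mu; apply: ereal_inf_lbound; exists h. Qed.

Lemma envelope_ge_min [a b mu] : (a <= mu <= b)%R ->
  Order.min (F a) (F b) <= envelope gs mu.
Proof.
move=> mu_ab; apply/ereal_infP => _ [h [hc [hp hge]] <-].
apply: le_trans (concave_ext_ge_min hc hp mu_ab).
by rewrite le_min !ge_min !hge ?orbT.
Qed.

End Envelope.

Lemma U_le_plateau t x : U t x <= plateau (Vlo t) (Vhi t) (r1max t) x.
Proof.
elim/gtree_nth_ind: t x => [r1 r2|p c cs IH] x.
  by rewrite /= /plateau -eq_le eq_sym; case: eqP; rewrite ?lexx.
rewrite U_Node; apply: envelope_le (plateau_concave _ _ _) (plateau_no_pinfty _ _ _) _ _.
move=> {}x; rewrite big_map big_seq; apply: bigmax_le => [|i]; first exact: leNye.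
rewrite mem_iota add0n => /andP[_ lt_i].
rewrite /restr; case: ifPn => [beta_le|_]; last exact: leNye.
apply: le_trans (IH i x) _; rewrite /plateau.
case: ifPn => [/andP[lo hi]|_]; last exact: leNye.
rewrite ifT ?lee_fin; first exact: le_child_max.
rewrite (Vlo_Node_le lt_i beta_le lo) /=.
exact: le_trans hi (le_child_max _ lt_i).
Qed.

Lemma le_bigmax_map_iota [G : nat -> R -> \bar R] [n i x] : (i < n)%N ->
  G i x <= \big[Order.max/-oo]_(g <- [seq G j | j <- iota 0 n]) g x.
Proof. by move=> lt_i; rewrite big_map le_bigmax_seq // mem_iota. Qed.

Lemma U_gtNy t x : (Vlo t <= x <= Vhi t)%R -> -oo < U t x.
Proof.
elim/gtree_nth_ind: t x => [r1 r2|p c cs IH] x.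
  by rewrite /= -eq_le => /eqP <-; rewrite eqxx ltNyr.
move=> x_in; rewrite U_Node; apply: lt_le_trans (envelope_ge_min _ x_in).
have branch_gtNy i y : (i < size (c :: cs))%N -> (Vlo (Node p c cs) <= y)%R ->
    (Vlo (nth c (c :: cs) i) <= y <= Vhi (nth c (c :: cs) i))%R ->
    -oo < restr (U (nth c (c :: cs) i)) (beta p (map (@Vlo R) (c :: cs)) i) y.
  by move=> lt_i lo_y y_in; rewrite /restr (le_trans (beta_le_Vlo i)) ?lee_fin // IH.
have [ia lt_ia Vlo_ia] := @Vlo_Node_attained p c cs.
have [ib lt_ib Vhi_ib] := @child_max_attained c cs (@Vhi R).
rewrite lt_min; apply/andP; split.
  apply: lt_le_trans (le_bigmax_map_iota lt_ia); apply: branch_gtNy => //.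
  by rewrite Vlo_ia lexx /= Vlo_le_Vhi.
apply: lt_le_trans (le_bigmax_map_iota lt_ib); apply: branch_gtNy => //.
  exact: Vlo_le_Vhi (Node p c cs).
by rewrite /= Vhi_ib lexx andbT Vlo_le_Vhi.
Qed.

End Game.

Theorem lemma3 (R : realType) (s : gtree R) :
  [set mu : R | (-oo < U s mu)%E] = `[Vlo s, Vhi s].
Proof.
rewrite eqEsubset; split=> x /=; rewrite in_itv /=; last exact: U_gtNy.
move=> /lt_le_trans /(_ (U_le_plateau s x)); rewrite /plateau.
by case: ifP => // _; rewrite ltxx.
Qed.
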